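(* For any finite simple graph $G$, $\mathrm{mur}(G)=\mathrm{mur}(\overline{G})$, where $\overline{G}$ is the complement of $G$.
   Context: For a finite simple undirected graph $G$ on vertices $v_1,\dots,v_n$, let $A_G$ be its $(0,1)$-adjacency matrix, $D_G=\mathrm{diag}(d_1,\dots,d_n)$ with $d_i$ the degree of $v_i$, $I$ the $n\times n$ identity matrix and $J$ the $n\times n$ all-ones matrix. A universal adjacency matrix of $G$ is any matrix $\alpha A_G+\beta I+\gamma J+\delta D_G$ with real scalars $\alpha,\beta,\gamma,\delta$ and $\alpha\neq 0$. The minimum universal rank $\mathrm{mur}(G)$ is the minimum rank over all universal adjacency matrices of $G$. *)

From mathcomp Require Import all_boot all_order all_algebra.
From mathcomp Require Import boolp reals.
Set Implicit Arguments. Unset Strict Implicit. Unset Printing Implicit Defensive.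
Import GRing.Theory Num.Theory.
Local Open Scope ring_scope.

Definition simple_graph (n : nat) (e : rel 'I_n) : Prop :=
  (forall i, ~~ e i i) /\ (forall i j, e i j = e j i).

Definition compl_graph (n : nat) (e : rel 'I_n) : rel 'I_n :=
  fun i j => (i != j) && ~~ e i j.

Section UA.
Variable R : realType.
Variable n : nat.
Variable e : rel 'I_n.

Definition adjmx : 'M[R]_n := \matrix_(i, j) (e i j)%:R.
Definition degmx : 'M[R]_n := \matrix_(i, j) (if i == j then (#|[set k | e i k]|)%:R else 0).
Definition Jmx : 'M[R]_n := const_mx 1.

Definition univ_adj (a b c d : R) : 'M[R]_n :=
  a *: adjmx + b *: 1%:M + c *: Jmx + d *: degmx.

Definition univ_rank (r : nat) : Prop :=
  exists a b c d : R, a != 0 /\ \rank (univ_adj a b c d) = r.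

Lemma univ_rank_ex : exists r, (fun r => `[< univ_rank r >]) r.
Proof.
exists (\rank (univ_adj 1 0 0 0)); apply/asboolP.
by exists 1, 0, 0, 0; split; [exact: oner_neq0|].
Qed.

Definition mur : nat := ex_minn univ_rank_ex.
End UA.

From mathcomp Require Import all_boot all_order all_algebra.
From mathcomp Require Import boolp reals.
From mathcomp Require Import ring zify.
Import GRing.Theory Num.Theory.
Local Open Scope ring_scope.

(* Complementation sends A to J - I - A and D to (n-1)I - D, so every universal
   adjacency matrix of the complement is a universal adjacency matrix of the
   graph itself (with the A-coefficient negated), and conversely since
   complementation is an involution.  Hence both graphs realize the same ranks. *)

Section Complement.
Variables (n : nat) (e : rel 'I_n).
Hypothesis e_irr : forall i, ~~ e i i.

Lemma compl_graph_irr i : ~~ compl_graph e i i.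
Proof. by rewrite /compl_graph eqxx. Qed.

Lemma compl_graphK : compl_graph (compl_graph e) = e.
Proof.
apply/funext => i; apply/funext => j; rewrite /compl_graph negb_and negbK.
by case: eqVneq => [->|] /=; [rewrite (negbTE (e_irr j)) | case: (e i j)].
Qed.

Lemma degree_compl_graph i :
  (#|[set k | compl_graph e i k]| + #|[set k | e i k]|)%N = n.-1.
Proof.
have -> : [set k | compl_graph e i k] = ~: (i |: [set k | e i k]).
  by apply/setP => k; rewrite !inE /compl_graph eq_sym; case: (k == i).
have := cardsC (i |: [set k | e i k]).
rewrite cardsU1 inE (negbTE (e_irr i)) card_ord; lia.
Qed.

Variable R : realType.

Lemma adjmx_compl : adjmx R (compl_graph e) = Jmx R n - 1%:M - adjmx R e.
Proof.
apply/matrixP => i j; rewrite !mxE /compl_graph.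
case: eqVneq => [<-|_] /=; first by rewrite (negbTE (e_irr i)) subrr subr0.
by case: (e i j); rewrite /= subr0 ?subrr ?subr0.
Qed.

Lemma degmx_compl : degmx R (compl_graph e) = (n.-1)%:R *: 1%:M - degmx R e.
Proof.
apply/matrixP => i j; rewrite !mxE.
case: eqVneq => _ /=; last by rewrite mulr0 subr0.
by rewrite mulr1 -(degree_compl_graph i) natrD addrK.
Qed.

Lemma univ_adj_compl (a b c d : R) :
  univ_adj (compl_graph e) a b c d =
  univ_adj e (- a) (b - a + d * (n.-1)%:R) (a + c) (- d).
Proof.
rewrite /univ_adj adjmx_compl degmx_compl; apply/matrixP => i j.
by rewrite !mxE; ring.
Qed.

Lemma univ_rank_compl r : univ_rank R e r -> univ_rank R (compl_graph e) r.
Proof.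
case=> a [b [c [d [a_neq0 <-]]]].
exists (- a), (b - a + d * (n.-1)%:R), (a + c), (- d).
rewrite oppr_eq0 a_neq0 univ_adj_compl; split=> //.
by congr (\rank (univ_adj _ _ _ _ _)); ring.
Qed.

End Complement.

Lemma mur_leq (R : realType) (n m : nat) (e : rel 'I_n) (e' : rel 'I_m) :
  (forall r, univ_rank R e r -> univ_rank R e' r) -> (mur R e' <= mur R e)%N.
Proof.
move=> ranks_ee'; rewrite /mur.
case: ex_minnP => r' _ min_r'; case: ex_minnP => r /asboolP e_r _.
by apply/min_r'/asboolP/ranks_ee'.
Qed.

Theorem lemma1 (R : realType) (n : nat) (e : rel 'I_n) :
  simple_graph e -> mur R e = mur R (compl_graph e).
Proof.
case=> e_irr _; apply/eqP; rewrite eqn_leq.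
have := @univ_rank_compl _ (compl_graph e) (@compl_graph_irr _ e) R.
rewrite compl_graphK // => /mur_leq ->.
by rewrite mur_leq //; exact: univ_rank_compl.
Qed.
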